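(* Let $\Omega$ be a region of $\mathcal{C}^*_{n,A}$ ($n\ge1$), $\bm x\in\Omega$ with associated permutation $\pi$, and let $D_{1,\pi}(\Omega)$ be the Dyck path defined below. Then $\mathrm{level}(\Omega)=\ell(D_{1,\pi}(\Omega))$.
   Context: Let $A=\{a_1,\dots,a_m\}$ with $a_1>\dots>a_m>0$; $\mathcal{C}^*_{n,A}$ is the arrangement in $\mathbb{R}^n$ of hyperplanes $x_i-x_j=a_k$ ($i\ne j$, $1\le k\le m$); regions are connected components of the complement. The level of $X\subseteq\mathbb{R}^n$ is the smallest integer $\ell\ge0$ such that there are a linear subspace $W$ of dimension $\ell$ and $r>0$ with $X\subseteq\{\bm x:\min_{\bm y\in W}\|\bm x-\bm y\|\le r\}$. The associated permutation of $\bm x$ is the unique $\pi\in\mathfrak{S}_n$ with $x_{\pi(1)}\ge\dots\ge x_{\pi(n)}$ and $\pi^{-1}(i)<\pi^{-1}(j)$ whenever $i<j$ and $x_i=x_j$. Let $\alpha_i=\#\{j\in[n]:x_{\pi(i)}-x_{\pi(j)}>a_1\}$, so $\alpha_1\ge\dots\ge\alpha_n=0$ and $\alpha_i\le n-i$. $D_{1,\pi}(\Omega)$ is the lattice path from $(0,n)$ to $(n,0)$ with steps $E=(1,0)$, $S=(0,-1)$ given by $E^{n-\alpha_1}SE^{\alpha_1-\alpha_2}S\cdots E^{\alpha_{n-1}-\alpha_n}S$ (its steps labeled by $\pi$); it is a Dyck path. For a Dyck path $D$ from $(0,n)$ to $(n,0)$, $\ell(D)$ is the number of $k\in\{1,\dots,n\}$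 such that $D$ passes through $(k,n-k)$ (its number of prime components). *)

From HB Require Import structures.
From mathcomp Require Import all_boot all_order all_algebra all_fingroup.
From mathcomp Require Import all_classical all_reals all_analysis.
Set Implicit Arguments. Unset Strict Implicit. Unset Printing Implicit Defensive.
Import Order.TTheory GRing.Theory Num.Theory.
Import numFieldNormedType.Exports.
Local Open Scope classical_set_scope.
Local Open Scope ring_scope.

(* Points of R^n are row vectors 'rV[R]_n; coordinate i of x is x ord0 i
   (coordinates are 0-indexed: x_{i+1} in the paper is x ord0 i).
   A = {a_1 > ... > a_m > 0} is a sequence a = [:: a_1; ...; a_m]. *)

Section Defs.
Variable R : realType.

Definition admissible (a : seq R) : Prop :=
  (0 < size a)%N /\ sorted (fun u v => v < u) a /\ all (fun u => 0 < u) a.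

Definition arr_complement (n : nat) (a : seq R) : set 'rV[R]_n :=
  [set x | forall i j : 'I_n, i != j -> forall k, k \in a -> x ord0 i - x ord0 j != k].

Definition is_region (n : nat) (a : seq R) (Om : set 'rV[R]_n) : Prop :=
  exists2 x0 : 'rV[R]_n, arr_complement a x0 &
    Om = connected_component (arr_complement a : set 'rV[R]_n) x0.

Definition euclid (n : nat) (x : 'rV[R]_n) : R :=
  Num.sqrt (\sum_(i < n) (x ord0 i) ^+ 2).

(* X is contained in the closed r-neighbourhood of some linear subspace of
   dimension l (the subspace is the row space of a rank-l matrix W) *)
Definition level_le (n : nat) (X : set 'rV[R]_n) (l : nat) : Prop :=
  exists W : 'M[R]_(l, n), \rank W = l /\
   exists2 r : R, 0 < r &
     forall x, X x -> exists y : 'rV[R]_n, (y <= W)%MS /\ euclid (x - y) <= r.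

Definition is_level (n : nat) (X : set 'rV[R]_n) (l : nat) : Prop :=
  level_le X l /\ forall l', level_le X l' -> (l <= l')%N.

(* p is the associated permutation of x (positions 0-indexed):
   x_{p 0} >= ... >= x_{p (n-1)}, ties broken by increasing index *)
Definition assoc_perm (n : nat) (x : 'rV[R]_n) (p : 'S_n) : Prop :=
  (forall i j : 'I_n, (i < j)%N -> x ord0 (p j) <= x ord0 (p i)) /\
  (forall i j : 'I_n, (i < j)%N -> x ord0 i = x ord0 j ->
      ((p^-1)%g i < (p^-1)%g j)%N).

Definition alpha (n : nat) (a : seq R) (x : 'rV[R]_n) (p : 'S_n) (i : 'I_n) : nat :=
  #|[set j : 'I_n | x ord0 (p i) - x ord0 (p j) > head 0 a]|.

End Defs.

(* lattice paths as sequences of steps: true = E = (1,0), false = S = (0,-1) *)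
(* E^{n-al_1} S E^{al_1-al_2} S ... E^{al_{n-1}-al_n} S, given al = [al_1..al_n] *)
Definition dyck_of_alphas (n : nat) (al : seq nat) : seq bool :=
  flatten [seq rcons (nseq e true) false | e <- pairmap (fun u v => u - v)%N n al].

Definition D1 (R : realType) (n : nat) (a : seq R) (x : 'rV[R]_n) (p : 'S_n) : seq bool :=
  dyck_of_alphas n [seq alpha a x p i | i <- enum 'I_n].

Definition path_points (n : nat) (D : seq bool) : seq (nat * nat) :=
  [seq (count id (take t D), n - count negb (take t D))%N | t <- iota 0 (size D).+1].

Definition ell (n : nat) (D : seq bool) : nat :=
  count (fun k => (k, n - k)%N \in path_points n D) (iota 1 n).

From HB Require Import structures.
From mathcomp Require Import all_boot all_order all_algebra all_fingroup.
From mathcomp Require Import all_classical all_reals all_analysis.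
From mathcomp Require Import lra zify.
Set Implicit Arguments. Unset Strict Implicit. Unset Printing Implicit Defensive.
Import Order.TTheory GRing.Theory Num.Theory.
Import numFieldNormedType.Exports.

(* Sort the coordinates of [x] decreasingly and cut the sorted list wherever
   two consecutive values differ by more than [a_1 = max A].  The path
   [D_{1,pi}] touches the diagonal exactly after the last index of each block,
   so [ell] counts the blocks.
   Inside the region no difference [y_u - y_v] can cross [a_1], so the
   coordinates of a block stay within [n a_1] of each other and the region lies
   near the span of the block indicator vectors: its level is at most the
   number of blocks.  Conversely, raising the leading blocks by any [t >= 0]
   only widens the gaps between blocks, so these rays stay in the region; a
   subspace whose neighbourhood contains them contains all the block
   indicators, hence has dimension at least the number of blocks. *)

Definition dyck_of_steps (es : seq nat) : seq bool :=
  flatten [seq rcons (nseq e true) false | e <- es].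

Lemma dyck_of_steps_cons e es :
  dyck_of_steps (e :: es) = nseq e true ++ false :: dyck_of_steps es.
Proof. by rewrite /dyck_of_steps /= cat_rcons. Qed.

Lemma count_take_nseq_true (P : pred bool) t e :
  count P (take t (nseq e true)) = P true * minn t e.
Proof.
case: (leqP t e) => te; first by rewrite take_nseq // count_nseq; congr (_ * _); lia.
by rewrite take_oversize ?size_nseq ?count_nseq; [congr (_ * _); lia | lia].
Qed.

Lemma dyck_of_steps_visits (es : seq nat) k E :
  (exists t, count negb (take t (dyck_of_steps es)) = k /\
             count id (take t (dyck_of_steps es)) = E) <->
  k <= size es /\ sumn (take k es) <= E <= sumn (take k es) + nth 0 es k.
Proof.
elim: es k E => [|e es IH] k E.
  split=> [[t [<- <-]] | [/[!leqn0]/eqP-> /=]]; first by case: t.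
  by rewrite leqn0 => /eqP->; exists 0.
rewrite dyck_of_steps_cons; split.
  case=> t [<- <-]; case: (leqP t e) => [te | et].
    by rewrite takel_cat ?size_nseq // !count_take_nseq_true /=; lia.
  have [t' ->] : exists t', t = e + t'.+1 by exists (t - e).-1; lia.
  rewrite takeD take_size_cat ?size_nseq // drop_size_cat ?size_nseq //=.
  rewrite !count_cat !count_nseq /= !add0n mul1n.
  have [] := (IH (count negb (take t' (dyck_of_steps es)))
                 (count id (take t' (dyck_of_steps es)))).1; first by exists t'.
  by move=> ? ?; split; lia.
case: k => [|k] /= [k_le E_range].
  exists E; rewrite takel_cat ?size_nseq; last lia.
  by rewrite !count_take_nseq_true /=; split; lia.
have [|t' [cnt_S cnt_E]] := (IH k (E - e)).2; first by split; lia.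
exists (e + t'.+1); rewrite takeD take_size_cat ?size_nseq //.
rewrite drop_size_cat ?size_nseq //= !count_cat !count_nseq /= cnt_S cnt_E.
by split; lia.
Qed.

Lemma sumn_take_pairmap_subn m al k : k <= size al -> path geq m al ->
  sumn (take k (pairmap subn m al)) + nth 0 (m :: al) k = m.
Proof.
elim: al m k => [|u al IH] m [|k] //= k_le /andP[um al_path].
by rewrite -addnA IH //; lia.
Qed.

Lemma count_negb_dyck_of_steps es : count negb (dyck_of_steps es) = size es.
Proof.
by elim: es => //= e es IH; rewrite dyck_of_steps_cons count_cat /= count_nseq IH.
Qed.

(* By telescoping, the path has made [n - al_i] E steps right after its
   [i+1]-th S step. *)
Lemma ell_dyck_of_alphas n al : size al = n ->
  (forall i, i < n -> nth 0 al i <= n - i.+1) -> path geq n al ->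
  ell n (dyck_of_alphas n al) = count (fun i => nth 0 al i == n - i.+1) (iota 0 n).
Proof.
move=> size_al al_le al_path.
rewrite /ell (iotaDl 1 0) count_map; apply: eq_in_count => i.
rewrite mem_iota /= => lt_in.
set es := pairmap subn n al.
have size_es : size es = n by rewrite size_pairmap.
have tele : sumn (take i.+1 es) + nth 0 al i = n.
  by apply: (@sumn_take_pairmap_subn n al i.+1); lia.
have visits := dyck_of_steps_visits es i.+1 i.+1.
have al_i_le := al_le i lt_in; rewrite /path_points.
change (dyck_of_alphas n al) with (dyck_of_steps es).
apply/idP/idP => [|/eqP al_i].
  case/mapP=> t _ [cnt_E cnt_S].
  have cnt_le : count negb (take t (dyck_of_steps es)) <= n.
    by rewrite -size_es -count_negb_dyck_of_steps -{2}(cat_take_drop t (dyck_of_steps es))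
               count_cat leq_addr.
  have [|_ /andP[+ _]] := visits.1; first by exists t; split; lia.
  lia.
have [|t [cnt_S cnt_E]] := visits.2; first by split; lia.
have [tD | /ltnW Dt] := leqP t (size (dyck_of_steps es)).
  by apply/mapP; exists t; [rewrite mem_iota; lia | rewrite cnt_S cnt_E].
apply/mapP; exists (size (dyck_of_steps es)); first by rewrite mem_iota; lia.
by rewrite take_size -(take_oversize Dt) cnt_S cnt_E.
Qed.

Local Open Scope ring_scope.
Local Open Scope classical_set_scope.

Lemma card_ord_gt N (i : 'I_N) : #|[set j : 'I_N | (i < j)%N]%SET| = (N - i.+1)%N.
Proof.
have count_gt : count (fun k => i < k)%N (iota 0 N) = (N - i.+1)%N.
  have := count_predC (fun k => k <= i)%N (iota 0 N).
  rewrite -size_filter (filter_iota_leq 0 (ltn_ord i)) !size_iota.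
  rewrite (@eq_count _ (predC (fun k => k <= i)%N) (fun k => i < k)%N) => [|k]; first lia.
  by rewrite /= -ltnNge.
rewrite cardsE cardE /enum_mem size_filter -enumT -count_gt -val_enum_ord count_map.
by apply: eq_count => j.
Qed.

Lemma connected_nonvanishing_lt0 (R : realType) (T : topologicalType) (A : set T)
    (f : T -> R) x y :
  connected A -> continuous f -> (forall z, A z -> f z != 0) -> A x -> A y ->
  f x < 0 -> f y < 0.
Proof.
move=> cA cf nz Ax Ay fx; rewrite ltNge; apply/negP => fy.
have fy0 : 0 < f y by rewrite lt_neqAle eq_sym nz.
have : is_interval (f @` A).
  apply/connected_intervalP/connected_continuous_connected => //.
  exact: continuous_subspaceT.
move=> /(_ (f x) (f y)) /(_ _ _ 0) []; [by exists x|by exists y|by rewrite !ltW|].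
by move=> z Az fz0; move: (nz z Az); rewrite fz0 eqxx.
Qed.

Lemma continuous_coord_sub (R : realType) n (i j : 'I_n) (c : R) :
  continuous (fun y : 'rV[R]_n => y ord0 i - y ord0 j - c).
Proof.
move=> y.
exact: cvgB (cvgB (@coord_continuous R 1 n ord0 i y) (@coord_continuous R 1 n ord0 j y))
  (cvg_cst c).
Qed.

Lemma connected_segment_image (R : realType) n (x d : 'rV[R]_n) (t : R) :
  connected [set x + s *: d | s in `[0, t]].
Proof.
apply: connected_continuous_connected; first exact: segment_connected.
apply: continuous_subspaceT => s.
have scaled : (fun s' : R => s' *: d) @ s --> s *: d by apply: cvgZr_tmp; exact: cvg_id.
exact: cvgD (cvg_cst x) scaled.
Qed.

Lemma euclid_coord_le (R : realType) n (v : 'rV[R]_n) i : `|v ord0 i| <= euclid v.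
Proof.
rewrite /euclid -sqrtr_sqr; apply: ler_wsqrtr.
by rewrite (bigD1 i) //= lerDl; apply: sumr_ge0 => j _; exact: sqr_ge0.
Qed.

Lemma euclid_le_coord_bound (R : realType) n (v : 'rV[R]_n) (M : R) :
  0 <= M -> (forall i, `|v ord0 i| <= M) -> euclid v <= n%:R * M.
Proof.
move=> M0 vM; have nM : 0 <= n%:R * M by rewrite mulr_ge0.
rewrite /euclid -(ger0_norm nM) -sqrtr_sqr; apply: ler_wsqrtr.
apply: (@le_trans _ _ (\sum_(i < n) M ^+ 2)).
  by apply: ler_sum => i _; have := vM i; rewrite ler_norml => /andP[]; nra.
rewrite sumr_const card_ord -mulr_natr exprMn.
have : (n%:R : R) <= n%:R ^+ 2.
  by rewrite -natrX ler_nat; case: (n) => // k; rewrite expnS leq_pmulr.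
have := sqr_ge0 M; nra.
Qed.

Lemma coord_mulmx_le (R : realType) n m (v : 'rV[R]_n) (K : 'M[R]_(n, m)) j :
  `|(v *m K) ord0 j| <= euclid v * \sum_i `|K i j|.
Proof.
rewrite mxE mulr_sumr; apply: (le_trans (ler_norm_sum _ _ _)).
by apply: ler_sum => i _; rewrite normrM ler_wpM2r // euclid_coord_le.
Qed.

(* Were [z] outside the row space of [W], some coordinate of [z *m cokermx W]
   would be nonzero; along the ray it grows linearly, whereas [cokermx W]
   kills the row space, so it stays bounded on points within [r] of it. *)
Lemma submx_of_near_ray (R : realType) n l (W : 'M[R]_(l, n)) (r : R) (x z : 'rV[R]_n) :
  (forall t : R, 0 <= t -> exists y, (y <= W)%MS /\ euclid (x + t *: z - y) <= r) ->
  (z <= W)%MS.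
Proof.
move=> near; rewrite submxE; apply/eqP/rowP => j; rewrite [RHS]mxE.
set K := cokermx W; set d := (z *m K) ord0 j.
apply/eqP; apply: contraT => d_neq0.
set S := \sum_i `|K i j|; set c := (x *m K) ord0 j.
have S_ge0 : 0 <= S by apply: sumr_ge0.
have d_gt0 : 0 < `|d| by rewrite normr_gt0.
set t := (`|c| + `|r| * S + 1) / `|d|.
have t_ge0 : 0 <= t by rewrite divr_ge0 // !addr_ge0 // mulr_ge0.
have [y [yW y_near]] := near t t_ge0.
have yK : y *m K = 0 by apply/eqP; rewrite -submxE.
have coordE : ((x + t *: z - y) *m K) ord0 j = c + t * d.
  by rewrite mulmxBl mulmxDl -scalemxAl yK subr0 [LHS]mxE [X in _ + X]mxE.
have bounded : `|c + t * d| <= `|r| * S.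
  have := coord_mulmx_le (x + t *: z - y) K j; rewrite coordE => /le_trans; apply.
  by rewrite ler_wpM2r // (le_trans y_near) // ler_norm.
have large : `|t * d| = `|c| + `|r| * S + 1.
  by rewrite normrM (ger0_norm t_ge0) /t mulfVK // gt_eqF.
have := ler_normB (c + t * d) c; rewrite [c + _]addrC addrK large.
by rewrite addrC; have := normr_ge0 c; lra.
Qed.

Section Region.
Variables (R : realType) (n : nat) (a : seq R) (x : 'rV[R]_n.+1) (p : 'S_n.+1).
Hypothesis a_adm : admissible a.
Hypothesis x_compl : arr_complement a x.
Hypothesis p_sorts : forall i j : 'I_n.+1, (i < j)%N -> x ord0 (p j) <= x ord0 (p i).

Local Notation a1 := (head 0 a).
Local Notation Om := (connected_component (arr_complement a) x).

Lemma a1_in : a1 \in a.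
Proof. by case: a_adm; case: a => // h t _ _; rewrite mem_head. Qed.

Lemma gt0_le_a1 c : c \in a -> 0 < c /\ c <= a1.
Proof.
case: a_adm => _ [a_sorted a_pos] ca; split; first by move/allP: a_pos; apply.
move: a_sorted ca; case: a => // h t /= a_sorted; rewrite inE => /orP[/eqP -> //|ct].
have gt_trans : transitive (fun u v : R => v < u).
  by move=> ? ? ? uv vw; exact: lt_trans vw uv.
by move/allP: (order_path_min gt_trans a_sorted) => /(_ c ct)/ltW.
Qed.

Lemma a1_gt0 : 0 < a1.
Proof. by case: (gt0_le_a1 a1_in). Qed.

Lemma x_p_le (i j : 'I_n.+1) : (j <= i)%N -> x ord0 (p i) <= x ord0 (p j).
Proof. by rewrite leq_eqVlt => /orP[/eqP/val_inj-> //|]; exact: p_sorts. Qed.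

Definition sorted_at (y : 'rV[R]_n.+1) (k : nat) : R := y ord0 (p (inord k)).

Lemma srt_le k j : (k <= j)%N -> (j <= n)%N -> sorted_at x j <= sorted_at x k.
Proof. by move=> kj jn; apply: x_p_le; rewrite !inordK //; lia. Qed.

Definition far (i : 'I_n.+1) := [set j : 'I_n.+1 | a1 < x ord0 (p i) - x ord0 (p j)]%SET.

Lemma alpha_far i : alpha a x p i = #|far i|.
Proof. by apply: eq_card => j; rewrite !inE; apply/idP/idP => [/set_mem | /mem_set]. Qed.

Lemma far_sub_gt i : far i \subset [set j : 'I_n.+1 | (i < j)%N]%SET.
Proof.
apply/fintype.subsetP => j; rewrite !inE ltnNge; apply: contraL => ji.
by have := x_p_le ji; have := a1_gt0; rewrite -leNgt; lra.
Qed.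

Lemma alpha_le i : (alpha a x p i <= n - i)%N.
Proof. by rewrite alpha_far; have := subset_leq_card (far_sub_gt i); rewrite card_ord_gt. Qed.

Lemma alpha_eq_max i :
  (alpha a x p i == n - i)%N = (far i == [set j : 'I_n.+1 | (i < j)%N]%SET).
Proof. by rewrite alpha_far -(subset_leqif_cards (far_sub_gt i)).2 card_ord_gt. Qed.

Lemma alpha_mono (i j : 'I_n.+1) : (i <= j)%N -> (alpha a x p j <= alpha a x p i)%N.
Proof.
move=> ij; rewrite !alpha_far; apply/subset_leq_card/fintype.subsetP => k; rewrite !inE.
by have := x_p_le ij; lra.
Qed.

(* [k] ends a block of the sorted coordinates: all later ones lie more than
   [a1] below it, i.e. [alpha_k] is maximal and the path touches the diagonal. *)
Definition block_end (k : nat) : bool := (k <= n)%N && (alpha a x p (inord k) == n - k)%N.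

Lemma block_end_le k : block_end k -> (k <= n)%N.
Proof. by case/andP. Qed.

Lemma block_end_gap k j : block_end k -> (k < j)%N -> (j <= n)%N ->
  a1 < sorted_at x k - sorted_at x j.
Proof.
case/andP=> kn; have := alpha_eq_max (inord k); rewrite inordK ?ltnS // => ->.
move=> /eqP far_k kj jn.
have : (inord j : 'I_n.+1) \in [set j0 : 'I_n.+1 | (k < j0)%N]%SET.
  by rewrite inE inordK.
by rewrite -far_k inE.
Qed.

Lemma not_block_end_gap k : (k < n)%N -> ~~ block_end k -> sorted_at x k - sorted_at x k.+1 <= a1.
Proof.
move=> kn; apply: contraR; rewrite -ltNge => gap; rewrite /block_end (ltnW kn) /=.
have := alpha_eq_max (inord k); rewrite inordK => [->|]; last lia.
rewrite finset.eqEsubset; apply/andP; split.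
  by have := far_sub_gt (inord k); rewrite inordK //; lia.
apply/fintype.subsetP => j; rewrite !inE => kj.
have := srt_le kj (ltn_ord j : (j <= n)%N); rewrite /sorted_at inord_val in gap *; lra.
Qed.

Lemma block_end_n : block_end n.
Proof.
rewrite /block_end leqnn subnn /=; have := alpha_le (inord n).
by rewrite inordK // subnn leqn0.
Qed.

Definition next_end (k : nat) : nat := (k + find block_end (iota k (n.+1 - k)))%N.

Lemma has_block_end_from k : (k <= n)%N -> has block_end (iota k (n.+1 - k)).
Proof. by move=> kn; apply/hasP; exists n; [rewrite mem_iota; lia | exact: block_end_n]. Qed.

Lemma block_end_next_end k : (k <= n)%N -> block_end (next_end k).
Proof.
move=> kn; have := nth_find 0 (has_block_end_from kn).
by have := has_block_end_from kn; rewrite has_find size_iota => lt_find; rewrite nth_iota.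
Qed.

Lemma next_end_le k : (k <= n)%N -> (next_end k <= n)%N.
Proof. by move=> kn; have := has_block_end_from kn; rewrite has_find size_iota /next_end; lia. Qed.

Lemma leq_next_end k : (k <= next_end k)%N.
Proof. exact: leq_addr. Qed.

Lemma not_block_end_before k j : (k <= j)%N -> (j < next_end k)%N -> ~~ block_end j.
Proof.
rewrite /next_end => kj jl; have := find_size block_end (iota k (n.+1 - k)).
rewrite size_iota => find_le.
have := @before_find _ 0 block_end (iota k (n.+1 - k)) (j - k).
rewrite nth_iota ?subnKC // => [before|]; last lia.
by apply/negbT/before; rewrite ltn_subLR.
Qed.

Lemma next_end_min k j : block_end j -> (k <= j)%N -> (next_end k <= j)%N.
Proof.
move=> ej kj; rewrite leqNgt; apply/negP => jl.
by move: (not_block_end_before kj jl); rewrite ej.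
Qed.

Lemma next_end_id k : block_end k -> next_end k = k.
Proof. by move=> ek; apply/eqP; rewrite eqn_leq next_end_min // leq_next_end. Qed.

Definition block_ends : seq nat := [seq k <- iota 0 n.+1 | block_end k].

Definition nblocks : nat := size block_ends.

Lemma mem_block_ends k : (k \in block_ends) = block_end k.
Proof.
rewrite mem_filter mem_iota; case ek: (block_end k) => //=.
by have := block_end_le ek; lia.
Qed.

Lemma block_end_nth m : (m < nblocks)%N -> block_end (nth 0 block_ends m).
Proof. by move=> m_lt; rewrite -mem_block_ends mem_nth. Qed.

Lemma nth_block_ends_inj (m m' : 'I_nblocks) :
  nth 0 block_ends m = nth 0 block_ends m' -> m = m'.
Proof.
move=> eq_nth; apply/val_inj/eqP.
by rewrite -(nth_uniq 0 (ltn_ord m) (ltn_ord m')) ?eq_nth // filter_uniq // iota_uniq.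
Qed.

Definition sorted_pos (q : 'I_n.+1) : nat := (p^-1)%g q.

Lemma p_inord_sorted_pos q : p (inord (sorted_pos q)) = q.
Proof. by rewrite /sorted_pos inord_val permKV. Qed.

Lemma sorted_pos_p_inord k : (k <= n)%N -> sorted_pos (p (inord k)) = k.
Proof. by move=> kn; rewrite /sorted_pos permK inordK. Qed.

Lemma sorted_pos_le q : (sorted_pos q <= n)%N.
Proof. by rewrite -ltnS ltn_ord. Qed.

Definition block_of (q : 'I_n.+1) : nat := next_end (sorted_pos q).

Lemma block_end_block_of q : block_end (block_of q).
Proof. exact: block_end_next_end (sorted_pos_le q). Qed.

Definition block_mx : 'M[R]_(nblocks, n.+1) :=
  \matrix_(m, q) (block_of q == nth 0 block_ends m)%:R.

Definition block_rep_mx : 'M[R]_(n.+1, nblocks) :=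
  \matrix_(q, m) (sorted_pos q == nth 0 block_ends m)%:R.

Lemma sum_sorted_pos_eq (f : 'I_n.+1 -> R) k : (k <= n)%N ->
  \sum_q f q * (sorted_pos q == k)%:R = f (p (inord k)).
Proof.
move=> kn; rewrite (bigD1 (p (inord k))) //= sorted_pos_p_inord // eqxx mulr1 big1 ?addr0 //.
move=> q /negPf q_neq; rewrite (_ : (sorted_pos q == k) = false) ?mulr0 //.
by apply/negP => /eqP pos_q; rewrite -pos_q p_inord_sorted_pos eqxx in q_neq.
Qed.

Lemma block_mx_mul_rep : block_mx *m block_rep_mx = 1%:M.
Proof.
apply/matrixP => m m'; rewrite !mxE.
under eq_bigr do rewrite !mxE.
have end_m' := block_end_nth (ltn_ord m').
rewrite (sum_sorted_pos_eq (fun q => (block_of q == nth 0 block_ends m)%:R)) ?block_end_le //.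
rewrite /block_of sorted_pos_p_inord ?block_end_le // next_end_id //.
congr ((nat_of_bool _)%:R); apply/eqP/eqP => [/esym/nth_block_ends_inj|->] //.
Qed.

Lemma rank_block_mx : \rank block_mx = nblocks.
Proof.
apply/eqP; rewrite eqn_leq rank_leq_row /=.
apply: (@mulmx1_min_rank _ nblocks _ _ block_mx 1%:M block_rep_mx).
by rewrite mul1mx block_mx_mul_rep.
Qed.

Definition block_proj (y : 'rV[R]_n.+1) : 'rV[R]_n.+1 :=
  (\row_m sorted_at y (nth 0 block_ends m)) *m block_mx.

Lemma block_projE y q : block_proj y ord0 q = sorted_at y (block_of q).
Proof.
rewrite !mxE; under eq_bigr do rewrite !mxE.
have in_ends : block_of q \in block_ends by rewrite mem_block_ends block_end_block_of.
have idx_lt : (index (block_of q) block_ends < nblocks)%N by rewrite index_mem.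
rewrite (bigD1 (Ordinal idx_lt)) //= nth_index // eqxx mulr1 big1 ?addr0 //.
move=> m /negPf m_neq; rewrite (_ : (block_of q == _) = false) ?mulr0 //.
apply/negP => /eqP eq_m; rewrite (@nth_block_ends_inj m (Ordinal idx_lt)) ?eqxx // in m_neq.
by rewrite /= nth_index.
Qed.

Definition head_blocks (k : nat) : 'rV[R]_n.+1 := \row_q (block_of q < k)%N%:R.

Lemma row_block_mx m :
  row m block_mx = head_blocks (nth 0 block_ends m).+1 - head_blocks (nth 0 block_ends m).
Proof.
apply/rowP => q; rewrite !mxE ltnS.
by case: ltngtP; rewrite ?subrr ?subr0.
Qed.

Lemma region_diff_lt y u v : Om y -> u != v -> x ord0 u - x ord0 v < a1 ->
  y ord0 u - y ord0 v < a1.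
Proof.
move=> Om_y uv x_uv; rewrite -subr_lt0.
apply: (@connected_nonvanishing_lt0 R _ Om (fun z => z ord0 u - z ord0 v - a1) x y).
- exact: component_connected.
- exact: continuous_coord_sub.
- move=> z /connected_component_sub z_compl; rewrite subr_eq0.
  exact: z_compl u v uv a1 a1_in.
- exact: connected_component_refl.
- exact: Om_y.
- by rewrite subr_lt0.
Qed.

Lemma region_sorted_step y k : Om y -> (k < n)%N -> ~~ block_end k ->
  `|sorted_at y k - sorted_at y k.+1| < a1.
Proof.
move=> Om_y kn not_end.
have neq : p (inord k) != p (inord k.+1) :> 'I_n.+1.
  by rewrite (inj_eq perm_inj); apply/eqP => /(congr1 val); rewrite /= !inordK; lia.
have down : sorted_at x k - sorted_at x k.+1 < a1.
  rewrite lt_neqAle not_block_end_gap // andbT.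
  exact: x_compl _ _ neq a1 a1_in.
have up : sorted_at x k.+1 - sorted_at x k < a1.
  by have := srt_le (leqnSn k) kn; have := a1_gt0; lra.
have down_y := region_diff_lt Om_y neq down; rewrite eq_sym in neq.
have up_y := region_diff_lt Om_y neq up.
by rewrite ltr_norml; apply/andP; split; rewrite /sorted_at; lra.
Qed.

Lemma region_sorted_spread y k d : Om y -> (k <= n)%N -> (k + d <= next_end k)%N ->
  `|sorted_at y k - sorted_at y (k + d)| <= d%:R * a1.
Proof.
move=> Om_y kn; elim: d => [|d IH] d_le; first by rewrite addn0 subrr normr0 mul0r.
have := next_end_le kn => end_le.
have not_end : ~~ block_end (k + d) by apply: (@not_block_end_before k); lia.
have step := region_sorted_step Om_y (ltac:(lia) : (k + d < n)%N) not_end.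
rewrite addnS -[sorted_at y k - _](subrKA (sorted_at y (k + d))) mulrSr mulrDl mul1r.
by rewrite (le_trans (ler_normD _ _)) // lerD ?IH ?ltW //; lia.
Qed.

Lemma region_near_block_proj y q : Om y -> `|y ord0 q - block_proj y ord0 q| <= n.+1%:R * a1.
Proof.
move=> Om_y; rewrite block_projE /block_of.
have pos_q_le := sorted_pos_le q; have le_end := leq_next_end (sorted_pos q).
have := region_sorted_spread (d := next_end (sorted_pos q) - sorted_pos q) Om_y pos_q_le.
rewrite subnKC // /sorted_at p_inord_sorted_pos => /(_ (leqnn _)) /le_trans; apply.
apply: ler_wpM2r; first exact: ltW a1_gt0.
by rewrite ler_nat; have := next_end_le pos_q_le; lia.
Qed.

Lemma region_level_le : level_le Om nblocks.
Proof.
exists block_mx; split; first exact: rank_block_mx.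
have a1_ge0 := ltW a1_gt0.
exists (n.+1%:R * (n.+1%:R * a1) + 1); first by rewrite ltr_pwDr // !mulr_ge0.
move=> y Om_y; exists (block_proj y); split; first exact: submxMl.
have near : euclid (y - block_proj y) <= n.+1%:R * (n.+1%:R * a1).
  apply: euclid_le_coord_bound; first by rewrite mulr_ge0.
  by move=> q; have := region_near_block_proj q Om_y; rewrite !mxE.
by rewrite (le_trans near) // lerDl.
Qed.

Lemma block_gap u v : (block_of u < block_of v)%N -> a1 < x ord0 u - x ord0 v.
Proof.
move=> lt_blocks; have pos_u_le := sorted_pos_le u.
have end_u := block_end_block_of u.
have u_before_v : (block_of u < sorted_pos v)%N.
  by rewrite ltnNge; apply: contraL lt_blocks => /(next_end_min end_u); rewrite -leqNgt.
have := block_end_gap end_u u_before_v (sorted_pos_le v).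
have := srt_le (leq_next_end (sorted_pos u)) (next_end_le pos_u_le).
by rewrite /block_of /sorted_at !p_inord_sorted_pos; lra.
Qed.

(* Moving the leading blocks up together only widens the gaps between blocks,
   and those already exceed [a1 = max A]. *)
Lemma region_ray k t : 0 <= t -> Om (x + t *: head_blocks k).
Proof.
move=> t_ge0.
have ray_compl s : 0 <= s -> arr_complement a (x + s *: head_blocks k).
  move=> s_ge0 u v uv c ca; rewrite !mxE; have [c_gt0 c_le] := gt0_le_a1 ca.
  case: ltnP => [u_head|u_tail]; case: ltnP => [v_head|v_tail] /=;
    rewrite ?mulr1 ?mulr0 ?addr0.
  - by rewrite opprD addrACA subrr addr0; exact: x_compl.
  - by apply/eqP => eq_c; have := block_gap (leq_trans u_head v_tail); lra.
  - by apply/eqP => eq_c; have := block_gap (leq_trans v_head u_tail); lra.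
  - exact: x_compl.
apply: (@connected_component_max _ _ [set x + s *: head_blocks k | s in `[0, t]]).
- by exists 0; [rewrite /= in_itv /= lexx | rewrite scale0r addr0].
- by move=> z [s]; rewrite /= in_itv /= => /andP[s_ge0 _] <-; exact: ray_compl.
- exact: connected_segment_image.
- by exists t => //; rewrite /= in_itv /= t_ge0 lexx.
Qed.

Lemma region_level_ge l : level_le Om l -> (nblocks <= l)%N.
Proof.
move=> [W [rankW [r _ near]]].
have head_sub k : (head_blocks k <= W)%MS.
  by apply: (@submx_of_near_ray _ _ _ W r x) => t t_ge0; exact: near _ (region_ray k t_ge0).
have : (block_mx <= W)%MS.
  apply/row_subP => m; rewrite row_block_mx.
  case/submxP: (head_sub (nth 0 block_ends m).+1) => D1 ->.
  case/submxP: (head_sub (nth 0 block_ends m)) => D2 ->.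
  by rewrite -mulmxBl submxMl.
by move/mxrankS; rewrite rank_block_mx rankW.
Qed.

Lemma ell_D1 : ell n.+1 (D1 a x p) = nblocks.
Proof.
set al := [seq alpha a x p i | i <- enum 'I_n.+1].
have nth_al i : (i < n.+1)%N -> nth 0 al i = alpha a x p (inord i).
  move=> i_lt; rewrite (nth_map ord0) ?size_enum_ord //; congr alpha.
  by apply: val_inj; rewrite /= nth_enum_ord // inordK.
have size_al : size al = n.+1 by rewrite size_map size_enum_ord.
have al_le i : (i < n.+1)%N -> (nth 0 al i <= n.+1 - i.+1)%N.
  by move=> i_lt; rewrite nth_al // subSS; have := alpha_le (inord i); rewrite inordK.
have al_path : path geq n.+1 al.
  apply/(pathP 0) => -[|i]; rewrite size_al => i_lt /=.
    by rewrite nth_al //; have := alpha_le (inord 0); lia.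
  have i_lt' : (i < n.+1)%N by rewrite ltnW.
  by rewrite !nth_al //; apply: alpha_mono; rewrite !inordK.
rewrite (ell_dyck_of_alphas size_al al_le al_path) /nblocks size_filter.
apply: eq_in_count => i; rewrite mem_iota => /andP[_ i_lt].
by rewrite nth_al // /block_end subSS -ltnS i_lt.
Qed.

End Region.

Theorem theorem3p5 (R : realType) (n : nat) (a : seq R)
  (Om : set 'rV[R]_n) (x : 'rV[R]_n) (p : 'S_n) :
  (1 <= n)%N -> admissible a -> is_region a Om -> Om x -> assoc_perm x p ->
  is_level Om (ell n (D1 a x p)).
Proof.
case: n Om x p => [//|n] Om x p _ a_adm [x0 _ ->] Om_x [p_sorts _].
have x_compl : arr_complement a x := connected_component_sub Om_x.
rewrite (same_connected_component Om_x) (ell_D1 a_adm p_sorts).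
by split; [exact: region_level_le | exact: region_level_ge].
Qed.
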